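(* Let $k$ be a unital commutative ring, $n$ a positive integer, and let $\varepsilon\in k$ be invertible. Then there exist isomorphisms of graded $k$-modules \[\operatorname{Tor}_{\star}^{\mathcal{PR}_n(\varepsilon)}(\mathbf{1},\mathbf{1})\cong\begin{cases}k&\star=0\\0&\star>0\end{cases}\quad\text{and}\quad\operatorname{Ext}^{\star}_{\mathcal{PR}_n(\varepsilon)}(\mathbf{1},\mathbf{1})\cong\begin{cases}k&\star=0\\0&\star>0.\end{cases}\]
   Context: A rook $n$-diagram is a graph on vertices $1,\dots,n$ (left column, top to bottom) and $\bar1,\dots,\bar n$ (right column), drawn in the rectangle they span, each of whose connected components is either an isolated vertex or a single edge joining a left vertex to a right vertex (a propagating edge); it is planar if no two edges cross. The rook algebra $\mathcal{R}_n(\varepsilon)$ is the free $k$-module on rook $n$-diagrams with product: identify the right column of $d_1$ with the left column of $d_2$ (middle column); let $\beta$ be the number of isolated vertices in the middle column; let $d_3$ join two outer vertices iff they are joined by a path; $d_1d_2=\varepsilon^\beta d_3$. The planar rook algebra $\mathcal{PR}_n(\varepsilon)$ is its subalgebra spanned by planar rook $n$-diagrams. The augmentation $\tau$ sends diagrams with $n$ propagating edges to $1$ and all others to $0$; $\mathbf{1}$ is $k$ with the algebra acting via $\tau$. *)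

From HB Require Import structures.
From mathcomp Require Import all_boot all_order all_algebra.
Set Implicit Arguments. Unset Strict Implicit. Unset Printing Implicit Defensive.
Import GRing.Theory.
Local Open Scope ring_scope.

(* A rook n-diagram is encoded as a partial injection f : 'I_n -> option 'I_n :
   f i = Some a  iff left vertex i+1 is joined to right vertex a+1 (0-based). *)
Definition rook_fun n (f : {ffun 'I_n -> option 'I_n}) : bool :=
  [forall i, forall j, ((f i != None) && (f i == f j)) ==> (i == j)].

Definition planar_fun n (f : {ffun 'I_n -> option 'I_n}) : bool :=
  [forall i : 'I_n, forall j : 'I_n, (i < j)%N ==>
     if f i is Some a then (if f j is Some b then (a < b)%N else true) else true].

Definition planar_rook n (f : {ffun 'I_n -> option 'I_n}) : bool :=
  rook_fun f && planar_fun f.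

(* Planar rook n-diagrams: the k-basis of PR_n(eps). *)
Definition PRdiag n := {f : {ffun 'I_n -> option 'I_n} | planar_rook f}.

(* Concatenation d1 d2 (d1 on the left, d2 on the right). *)
Definition comp_fun n (f1 f2 : {ffun 'I_n -> option 'I_n}) : {ffun 'I_n -> option 'I_n} :=
  [ffun i => obind f2 (f1 i)].

Lemma comp_planar_rook n (f1 f2 : {ffun 'I_n -> option 'I_n}) :
  planar_rook f1 -> planar_rook f2 -> planar_rook (comp_fun f1 f2).
Proof.
move=> /andP [/forallP R1 /forallP P1] /andP [/forallP R2 /forallP P2].
apply/andP; split.
- apply/forallP => i; apply/forallP => j; apply/implyP => /andP [].
  rewrite !ffunE.
  case E1i: (f1 i) => [a|] //= Ha; case E1j: (f1 j) => [b|] //=.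
  + move=> /eqP Hab.
    have : a == b.
      have := forallP (R2 a) b; rewrite Ha Hab eqxx /=; by apply.
    move=> /eqP Eab; subst b.
    have := forallP (R1 i) j; rewrite E1i E1j eqxx /=; by apply.
  + by move=> /eqP Hn; rewrite Hn in Ha.
- apply/forallP => i; apply/forallP => j; apply/implyP => Hij.
  rewrite !ffunE.
  have := forallP (P1 i) j; rewrite Hij /=.
  case: (f1 i) => [a|] //=; case: (f1 j) => [b|] //= Hab; last by case: (f2 a).
  have := forallP (P2 a) b; rewrite Hab /=; by [].
Qed.

(* The diagram d3 in d1 d2 = eps^beta d3. *)
Definition dmul n (d1 d2 : PRdiag n) : PRdiag n :=
  exist _ (comp_fun (val d1) (val d2)) (comp_planar_rook (valP d1) (valP d2)).

(* beta: number of isolated vertices in the middle column. *)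
Definition nfloat n (d1 d2 : PRdiag n) : nat :=
  #|[pred j : 'I_n | [forall i, val d1 i != Some j] && (val d2 j == None)]|.

Definition aug (R : pzRingType) n (d : PRdiag n) : R :=
  if [forall i, val d i != None] then 1 else 0.

(* Since PR_n(eps) is k-free on the finite set of planar rook
   diagrams, PR_n^{(x)q} is k-free on q-tuples of diagrams; chains (resp. cochains)
   are k-valued functions on q-tuples of diagrams. *)
Definition chain (R : pzRingType) n q := {ffun q.-tuple (PRdiag n) -> R}.

(* Coefficient of e_s in d(e_t), t = (a_1,...,a_{q+1}):
   d(a_1|...|a_{q+1}) = tau(a_1) (a_2|...|a_{q+1})
      + sum_{i=1}^{q} (-1)^i (a_1|...|a_i a_{i+1}|...|a_{q+1})
      + (-1)^{q+1} tau(a_{q+1}) (a_1|...|a_q). *)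
Definition bar_coef (R : comPzRingType) n (eps : R) q
    (t : (q.+1).-tuple (PRdiag n)) (s : q.-tuple (PRdiag n)) : R :=
  let x0 := thead t in
  aug R (thead t) * ((behead t == s :> seq (PRdiag n)) : nat)%:R
  + \sum_(j < q)
      (-1) ^+ j.+1 * eps ^+ nfloat (nth x0 t j) (nth x0 t j.+1)
      * ((take j t ++ dmul (nth x0 t j) (nth x0 t j.+1) :: drop j.+2 t
           == s :> seq (PRdiag n)) : nat)%:R
  + (-1) ^+ q.+1 * aug R (nth x0 t q) * ((take q t == s :> seq (PRdiag n)) : nat)%:R.

(* Differential of k (x)_A Bar(A) (x)_A ... computing Tor^A(1,1):  C_{q+1} -> C_q. *)
Definition bar_d (R : comPzRingType) n (eps : R) q (x : chain R n q.+1) : chain R n q :=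
  [ffun s => \sum_t x t * bar_coef eps t s].

(* Coboundary of Hom_A(Bar(A), 1) computing Ext_A(1,1):  C^q -> C^{q+1}. *)
Definition bar_delta (R : comPzRingType) n (eps : R) q (f : chain R n q) : chain R n q.+1 :=
  [ffun t => \sum_s bar_coef eps t s * f s].

From HB Require Import structures.
From mathcomp Require Import all_boot all_order all_algebra.
From mathcomp Require Import zify ring.
Import GRing.Theory.
Local Open Scope ring_scope.
Set Implicit Arguments. Unset Strict Implicit.

(* PR_n(eps) has a normalised right integral: e = \sum_S (-eps^-1)^|S| 1_S, where 1_S is the
   identity diagram with the vertices of S made isolated, satisfies tau(e) = 1 and
   e a = tau(a) e.  If a has no edge at the left vertex j, the terms of S and S + {j} cancel,
   because 1_{S+j} a = 1_S a with one more isolated middle vertex, i.e. one more factor eps;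
   if every vertex of a propagates, planarity forces a = 1.  Prepending e to bar chains is
   then a contracting homotopy, and its transpose contracts the bar cochains, so Tor and Ext
   vanish in positive degrees; in degree 0 both differentials are zero. *)

Lemma sumr_pred1_natl (R : pzSemiRingType) (T : finType) (x : T) (F : T -> R) :
  \sum_y (y == x)%:R * F y = F x.
Proof.
rewrite (bigD1 x) //= eqxx mul1r big1 ?addr0 // => y /negbTE ->.
by rewrite mul0r.
Qed.

Lemma sum_tuple_cons (R : pzSemiRingType) (T : finType) k (F : k.+1.-tuple T -> R) :
  \sum_t F t = \sum_x \sum_(w : k.-tuple T) F [tuple of x :: w].
Proof.
rewrite pair_big (reindex (fun p : T * k.-tuple T => [tuple of p.1 :: p.2])) //=.
exists (fun t => (thead t, [tuple of behead t])) => [[x w] _|t _] /=.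
  by rewrite theadE; congr pair; apply: val_inj.
by rewrite [RHS]tuple_eta.
Qed.

Lemma behead_tuple_cons (T : Type) k (x : T) (w : k.-tuple T) :
  [tuple of behead [tuple of x :: w]] = w.
Proof. exact: val_inj. Qed.

Lemma sum_set_toggle (V : zmodType) (T : finType) (x : T) (F : {set T} -> V) :
  (forall S : {set T}, x \notin S -> F (x |: S) = - F S) -> \sum_S F S = 0.
Proof.
move=> FxS; pose t (S : {set T}) := if x \in S then S :\ x else x |: S.
have t_inv : involutive t.
  by move=> S; rewrite /t; case: (boolP (x \in S)) => xS;
    rewrite !inE ?eqxx /= ?setD1K ?setU1K.
rewrite (bigID (fun S : {set T} => x \in S)) /= (reindex_inj (inv_inj t_inv)) /=.
rewrite (eq_bigl (fun S : {set T} => x \notin S)) => [|S]; last first.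
  by rewrite /t; case: (x \in S); rewrite !inE eqxx.
by rewrite -big_split big1 // => S xS; rewrite /t (negbTE xS) FxS //= addNr.
Qed.

Lemma leq_ord_incr m (f : 'I_m -> 'I_m) :
  {homo f : i j / (i < j)%N} -> forall i : 'I_m, (i <= f i)%N.
Proof.
move=> f_incr [i lt_im]; elim: i lt_im => // i IHi lt_i1m.
have lt_im := ltnW lt_i1m.
exact: leq_ltn_trans (IHi lt_im) (f_incr (Ordinal lt_im) (Ordinal lt_i1m) (ltnSn i)).
Qed.

Lemma incr_ord_id m (f : 'I_m -> 'I_m) : {homo f : i j / (i < j)%N} -> f =1 id.
Proof.
move=> f_incr i; apply: val_inj; apply/eqP; rewrite eqn_leq (leq_ord_incr f_incr) andbT.
pose g j := rev_ord (f (rev_ord j)).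
have g_incr : {homo g : j k / (j < k)%N}.
  move=> j k lt_jk; have lt_rev : (rev_ord k < rev_ord j)%N.
    by have := ltn_ord k; rewrite /=; lia.
  have := f_incr _ _ lt_rev; have := ltn_ord (f (rev_ord j)); rewrite /g /=; lia.
have := leq_ord_incr g_incr (rev_ord i); rewrite /g rev_ordK /=.
have := ltn_ord (f i); have := ltn_ord i; lia.
Qed.

Section BarCoefficients.
Variables (R : comPzRingType) (n : nat) (eps : R).

Lemma bar_coef_cons m (D : PRdiag n) (u s : m.+1.-tuple (PRdiag n)) :
  bar_coef eps [tuple of D :: u] s =
    aug R D * (u == s)%:R
    - eps ^+ nfloat D (thead u) * (dmul D (thead u) :: behead u == s :> seq (PRdiag n))%:R
    - (D == thead s)%:R * (bar_coef eps u [tuple of behead s]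
                           - aug R (thead u) * (behead u == behead s :> seq (PRdiag n))%:R).
Proof.
case/tupleP: u => u0 u; case/tupleP: s => s0 s.
rewrite /bar_coef /= !theadE big_ord_recl /= drop0 !eqseq_cons.
have nthD i : (i < m.+1)%N -> nth D (u0 :: u) i = nth u0 (u0 :: u) i.
  by move=> lt_im; apply: set_nth_default; rewrite /= size_tuple.
have nthD' i : (i < m)%N -> nth D u i = nth u0 u i.
  by move=> lt_im; apply: set_nth_default; rewrite size_tuple.
have shifted_terms : \sum_(i < m) (-1) ^+ (bump 0 i).+1
      * eps ^+ nfloat (nth D (u0 :: u) (0 + i)) (nth D u (0 + i))
      * ((D == s0) && (take (0 + i) (u0 :: u)
           ++ dmul (nth D (u0 :: u) (0 + i)) (nth D u (0 + i)) :: drop (bump 0 i) u == s))%:R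
    = - (D == s0)%:R * \sum_(j < m) (-1) ^+ j.+1
      * eps ^+ nfloat (nth u0 (u0 :: u) j) (nth u0 u j)
      * (take j (u0 :: u) ++ dmul (nth u0 (u0 :: u) j) (nth u0 u j) :: drop j.+1 u == s)%:R.
  rewrite mulr_sumr; apply: eq_bigr => i _.
  rewrite /bump leq0n add0n add1n nthD ?nthD' ?ltnS ?(ltnW (ltn_ord i)) //.
  rewrite -mulnb natrM exprS; ring.
under eq_bigr => i _ do rewrite eqseq_cons.
rewrite shifted_terms nthD // -!mulnb !natrM !exprS; ring.
Qed.

Lemma bar_coef0 (t : 1.-tuple (PRdiag n)) (s : 0.-tuple (PRdiag n)) : bar_coef eps t s = 0.
Proof.
case/tupleP: t => a t; rewrite (tuple0 t) (tuple0 s) /bar_coef /= big_ord0 theadE.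
rewrite expr1; ring.
Qed.

Lemma bar_d0 (y : chain R n 1) s : bar_d eps y s = 0.
Proof. by rewrite ffunE big1 // => t _; rewrite bar_coef0 mulr0. Qed.

Lemma bar_delta0 (f : chain R n 0) t : bar_delta eps f t = 0.
Proof. by rewrite ffunE big1 // => s _; rewrite bar_coef0 mul0r. Qed.

End BarCoefficients.

Section BarHomotopy.
Variables (R : comPzRingType) (n : nat) (eps : R) (c : PRdiag n -> R).
(* c lists the coefficients of an element e with tau(e) = 1 and e a = tau(a) e. *)
Hypothesis integral_aug : \sum_D c D * aug R D = 1.
Hypothesis integral_mulr : forall a D' : PRdiag n,
  \sum_D c D * (eps ^+ nfloat D a * (dmul D a == D')%:R) = aug R a * c D'.

Lemma sum_integral_bar_coef m (u s : m.+1.-tuple (PRdiag n)) :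
  \sum_D c D * bar_coef eps [tuple of D :: u] s
  + c (thead s) * bar_coef eps u [tuple of behead s] = (u == s)%:R.
Proof.
have absorb_head : \sum_D c D * (eps ^+ nfloat D (thead u)
                                   * (dmul D (thead u) :: behead u == s :> seq (PRdiag n))%:R)
    = aug R (thead u) * c (thead s) * (behead u == behead s :> seq (PRdiag n))%:R.
  case/tupleP: s => s0 s; rewrite /= theadE -integral_mulr mulr_suml.
  by apply: eq_bigr => D _; rewrite (@eqseq_cons _ (dmul D _)) -mulnb natrM !mulrA.
under eq_bigr => D _ do rewrite bar_coef_cons 2!mulrBr mulrA [c D * (_%:R * _)]mulrCA.
rewrite !sumrB -mulr_suml integral_aug mul1r absorb_head sumr_pred1_natl; ring.
Qed.

Definition chain_homotopy q (x : chain R n q) : chain R n q.+1 :=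
  [ffun t => c (thead t) * x [tuple of behead t]].

Definition cochain_homotopy q (g : chain R n q.+1) : chain R n q :=
  [ffun v : q.-tuple (PRdiag n) => \sum_D c D * g [tuple of D :: v]].

Lemma bar_d_homotopy m (x : chain R n m.+1) s :
  bar_d eps (chain_homotopy x) s + chain_homotopy (bar_d eps x) s = x s.
Proof.
rewrite /bar_d /chain_homotopy !ffunE sum_tuple_cons exchange_big mulr_sumr -big_split /=.
rewrite -[RHS](sumr_pred1_natl s x); apply: eq_bigr => u _.
rewrite -sum_integral_bar_coef mulrDl mulr_suml mulrCA mulrC; congr (_ + _).
by apply: eq_bigr => D _; rewrite ffunE theadE behead_tuple_cons mulrAC.
Qed.

Lemma bar_delta_homotopy m (g : chain R n m.+1) u :
  bar_delta eps (cochain_homotopy g) u + cochain_homotopy (bar_delta eps g) u = g u.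
Proof.
rewrite /bar_delta /cochain_homotopy !ffunE.
under eq_bigr => v _ do rewrite ffunE mulr_sumr.
under [X in _ + X]eq_bigr => D _ do rewrite ffunE mulr_sumr.
have -> : \sum_(v : m.-tuple (PRdiag n)) \sum_D bar_coef eps u v * (c D * g [tuple of D :: v])
    = \sum_s c (thead s) * bar_coef eps u [tuple of behead s] * g s.
  rewrite sum_tuple_cons exchange_big; apply: eq_bigr => v _; apply: eq_bigr => D _.
  by rewrite theadE behead_tuple_cons mulrCA mulrA.
rewrite exchange_big -big_split /= -[RHS](sumr_pred1_natl u g).
apply: eq_bigr => s _.
rewrite [s == u]eq_sym -sum_integral_bar_coef mulrDl mulr_suml addrC; congr (_ + _).
by apply: eq_bigr => D _; rewrite mulrA.
Qed.

End BarHomotopy.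

Section PlanarRookIntegral.
Variable n : nat.
Implicit Types (S : {set 'I_n}) (a : PRdiag n).

Definition partial_id_fun (S : {set 'I_n}) : {ffun 'I_n -> option 'I_n} :=
  [ffun i => if i \in S then None else Some i].

Lemma planar_rook_partial_id S : planar_rook (partial_id_fun S).
Proof.
by apply/andP; split; apply/forallP => i; apply/forallP => j; apply/implyP;
  rewrite !ffunE; case: (i \in S); case: (j \in S).
Qed.

Definition partial_id S : PRdiag n := exist _ (partial_id_fun S) (planar_rook_partial_id S).

Lemma aug_partial_id (R : pzRingType) S : aug R (partial_id S) = (S == set0)%:R.
Proof.
rewrite /aug; case: eqP => [->|/eqP /set0Pn [i iS]].
  by rewrite ifT //; apply/forallP => i; rewrite /= ffunE in_set0.
by rewrite ifF //; apply/negbTE/forallP => /(_ i); rewrite /= ffunE iS.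
Qed.

Lemma nfloat_partial_id S a :
  nfloat (partial_id S) a = #|[pred j | (j \in S) && (val a j == None)]|.
Proof.
apply: eq_card => j; rewrite !inE; congr (_ && _).
apply/forallP/idP => [/(_ j)|jS i]; first by rewrite /= ffunE; case: (j \in S); rewrite ?eqxx.
by rewrite /= ffunE; case: ifP => // iS; apply: contraTneq jS => -[<-]; rewrite iS.
Qed.

Lemma nfloat_partial_idU1 S a j :
  j \notin S -> val a j = None -> nfloat (partial_id (j |: S)) a = (nfloat (partial_id S) a).+1.
Proof.
move=> jS a_j; rewrite !nfloat_partial_id (cardD1 j) !inE eqxx a_j /= add1n.
congr _.+1; apply: eq_card => i; rewrite !inE; case: eqP => [->|] //=.
by rewrite (negbTE jS).
Qed.

Lemma dmul_partial_idU1 S a j :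
  val a j = None -> dmul (partial_id (j |: S)) a = dmul (partial_id S) a.
Proof.
move=> a_j; apply: val_inj; apply/ffunP => i; rewrite /= !ffunE !inE.
by case: eqP => //= ->; case: ifP.
Qed.

Lemma dmul_partial_id0 S : dmul (partial_id S) (partial_id set0) = partial_id S.
Proof.
apply: val_inj; apply/ffunP => i; rewrite /= !ffunE.
by case: ifP => //= _; rewrite ffunE in_set0.
Qed.

Lemma nfloat_partial_id0 S : nfloat (partial_id S) (partial_id set0) = 0%N.
Proof.
by rewrite nfloat_partial_id; apply: eq_card0 => j; rewrite !inE /= ffunE in_set0 andbF.
Qed.

Lemma planar_rook_total_id a : (forall i, val a i != None) -> a = partial_id set0.
Proof.
move=> a_total; pose f i := odflt i (val a i).
have a_f i : val a i = Some (f i) by rewrite /f; move: (a_total i); case: (val a i).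
have f_incr : {homo f : i j / (i < j)%N}.
  move=> i j lt_ij; case/andP: (valP a) => _ /forallP planar.
  by move: (forallP (planar i) j); rewrite lt_ij !a_f.
by apply: val_inj; apply/ffunP => i; rewrite /= ffunE in_set0 a_f (incr_ord_id f_incr).
Qed.

Variables (R : comPzRingType) (eps e' : R).
Hypothesis eps_invertible : eps * e' = 1.

Definition pr_integral (D : PRdiag n) : R :=
  \sum_(S : {set 'I_n}) (- e') ^+ #|S| * (D == partial_id S)%:R.

Lemma sum_pr_integral (F : PRdiag n -> R) :
  \sum_D pr_integral D * F D = \sum_(S : {set 'I_n}) (- e') ^+ #|S| * F (partial_id S).
Proof.
under eq_bigr => D _ do rewrite /pr_integral mulr_suml.
rewrite exchange_big; apply: eq_bigr => S _.
under eq_bigr => D _ do rewrite -mulrA.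
by rewrite -mulr_sumr sumr_pred1_natl.
Qed.

Lemma pr_integral_aug : \sum_D pr_integral D * aug R D = 1.
Proof.
rewrite sum_pr_integral.
under eq_bigr => S _ do rewrite aug_partial_id mulrC.
by rewrite sumr_pred1_natl cards0 expr0.
Qed.

Lemma pr_integral_mulr a D' :
  \sum_D pr_integral D * (eps ^+ nfloat D a * (dmul D a == D')%:R) = aug R a * pr_integral D'.
Proof.
rewrite sum_pr_integral /aug; case: ifP => [/forallP a_total | /negbT].
  rewrite mul1r (planar_rook_total_id a_total); apply: eq_bigr => S _.
  by rewrite dmul_partial_id0 nfloat_partial_id0 expr0 mul1r eq_sym.
rewrite negb_forall => /existsP [j]; rewrite negbK => /eqP a_j.
rewrite mul0r (sum_set_toggle (x := j)) // => S jS.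
rewrite nfloat_partial_idU1 // dmul_partial_idU1 // cardsU1 jS add1n !exprS.
transitivity (- (e' * eps) * ((- e') ^+ #|S| * (eps ^+ nfloat (partial_id S) a
                                 * (dmul (partial_id S) a == D')%:R))); first ring.
by rewrite [e' * eps]mulrC eps_invertible mulN1r.
Qed.

End PlanarRookIntegral.

Theorem theorem7p11 (R : comPzRingType) (n : nat) (eps : R) :
  (0 < n)%N -> (exists e' : R, eps * e' = 1) ->
  (* Tor_0 = C_0 / im d_0  is isomorphic to k *)
  ((exists phi : chain R n 0 -> R,
      (forall (a : R) (x y : chain R n 0),
          phi [ffun s => a * x s + y s] = a * phi x + phi y)
      /\ (forall c : R, exists x, phi x = c)
      /\ (forall x, phi x = 0 <-> exists y : chain R n 1, bar_d eps y = x))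
   (* Tor_{q+1} = 0 *)
   /\ (forall q (x : chain R n q.+1),
         (forall s, bar_d eps x s = 0) -> exists y : chain R n q.+2, bar_d eps y = x))
  /\
  (* Ext^0 = ker delta_0 is isomorphic to k *)
  ((exists psi : R -> chain R n 0,
      (forall a c d : R, psi (a * c + d) = [ffun s => a * psi c s + psi d s])
      /\ injective psi
      /\ (forall f : chain R n 0, (forall t, bar_delta eps f t = 0) <-> exists c, psi c = f))
   (* Ext^{q+1} = 0 *)
   /\ (forall q (f : chain R n q.+1),
         (forall t, bar_delta eps f t = 0) -> exists g : chain R n q, bar_delta eps g = f)).
Proof.
move=> _ [e' eps_inv].
have integral_aug := pr_integral_aug n e'.
have integral_mulr := pr_integral_mulr (n := n) eps_inv.
split; split.
- exists (fun x => x [tuple]); split=> [a x y|]; first by rewrite ffunE.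
  split=> [r|x]; first by exists [ffun=> r]; rewrite ffunE.
  split=> [x0|[y <-]]; last exact: bar_d0.
  by exists 0; apply/ffunP => s; rewrite bar_d0 (tuple0 s) x0.
- move=> q x dx0; exists (chain_homotopy (pr_integral e') x); apply/ffunP => s.
  by rewrite -[RHS](bar_d_homotopy integral_aug integral_mulr) [X in _ + X]ffunE dx0 mulr0 addr0.
- exists (fun r => [ffun=> r]); split=> [a r r'|]; first by apply/ffunP => s; rewrite !ffunE.
  split=> [r r' /ffunP/(_ [tuple])|f]; first by rewrite !ffunE.
  split=> [_|_ t]; last exact: bar_delta0.
  by exists (f [tuple]); apply/ffunP => s; rewrite ffunE (tuple0 s).
- move=> q f df0; exists (cochain_homotopy (pr_integral e') f); apply/ffunP => t.
  rewrite -[RHS](bar_delta_homotopy integral_aug integral_mulr) [X in _ + X]ffunE.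
  by rewrite big1 ?addr0 // => D _; rewrite df0 mulr0.
Qed.
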